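(* The Cantor–Bendixson rank of the poset $\mathcal{Q}$ is $\omega$, the first infinite ordinal.
   Context: $\mathcal{Q}$ is the set $\mathbb{N}\times(\mathbb{N}\cup\{0\})$ (with $\mathbb{N}=\{1,2,\dots\}$) with the relation $(t',r')<(t,r)$ iff $t'\mid t$ and $t'r'<tr$. For a set $\mathcal{P}$ with a transitive relation $<$, an element $p$ is minimal if no $q\in\mathcal{P}$ has $q<p$. Let $\mathcal{P}_0$ be the set of minimal elements of $\mathcal{P}$ and $\bar{\mathcal{P}}_0=\mathcal{P}\setminus\mathcal{P}_0$; for an ordinal $\alpha$, $\mathcal{P}_{\alpha+1}$ is the union of $\mathcal{P}_\alpha$ and the set of minimal elements of $\bar{\mathcal{P}}_\alpha$ (with the induced relation), and $\bar{\mathcal{P}}_{\alpha+1}=\mathcal{P}\setminus\mathcal{P}_{\alpha+1}$; for a limit ordinal $\beta$, $\mathcal{P}_\beta=\bigcup_{\alpha<\beta}\mathcal{P}_\alpha$ and $\bar{\mathcal{P}}_\beta=\bigcap_{\alpha<\beta}\bar{\mathcal{P}}_\alpha$. The Cantor–Bendixson rank $r_{CB}(\mathcal{P})$ is the minimal ordinal $\alpha$ with $\bar{\mathcal{P}}_\alpha=\bar{\mathcal{P}}_{\alpha+1}$. *)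

From mathcomp Require Import all_boot.
Set Implicit Arguments. Unset Strict Implicit. Unset Printing Implicit Defensive.

Section CB.
Variables (T : Type) (P : T -> Prop) (lt : T -> T -> Prop).

Definition minimal_in (S : T -> Prop) (p : T) : Prop :=
  S p /\ ~ (exists q, S q /\ lt q p).

Fixpoint CB_stage (n : nat) : T -> Prop :=
  match n with
  | 0 => minimal_in P
  | k.+1 => fun x => CB_stage k x \/
                    minimal_in (fun y => P y /\ ~ CB_stage k y) x
  end.

Definition CB_rest (n : nat) : T -> Prop := fun x => P x /\ ~ CB_stage n x.

Definition CB_stage_omega : T -> Prop := fun x => exists n, CB_stage n x.
Definition CB_rest_omega : T -> Prop := fun x => forall n, CB_rest n x.

Definition CB_stage_omega1 : T -> Prop :=
  fun x => CB_stage_omega x \/ minimal_in CB_rest_omega x.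
Definition CB_rest_omega1 : T -> Prop := fun x => P x /\ ~ CB_stage_omega1 x.

Definition same_set (A B : T -> Prop) : Prop := forall x, A x <-> B x.

(* r_CB(P) = omega : no finite alpha satisfies \bar P_alpha = \bar P_{alpha+1},
   and alpha = omega does. *)
Definition CB_rank_is_omega : Prop :=
  (forall n : nat, ~ same_set (CB_rest n) (CB_rest n.+1)) /\
  same_set CB_rest_omega CB_rest_omega1.
End CB.

(* The poset Q = N x (N u {0}) with N = {1,2,...} *)
Definition Q_carrier (p : nat * nat) : Prop := 0 < p.1.

Definition Q_lt (p q : nat * nat) : Prop :=
  (p.1 %| q.1) /\ p.1 * p.2 < q.1 * q.2.

From mathcomp Require Import all_boot.

(* The n-th Cantor-Bendixson stage of Q consists of the points of height
   t r <= n: a point of height m is minimal among the points of height >= m,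
   because every point (t, r) of larger height lies above (1, m).  So each
   finite step strictly removes the points of height n + 1, and every point
   is gone after omega steps. *)

Section CantorBendixson.
Variables (T : Type) (P : T -> Prop) (lt : T -> T -> Prop).

Lemma CB_rest_succ_neq n x :
  CB_rest P lt n x -> ~ CB_rest P lt n.+1 x ->
  ~ same_set (CB_rest P lt n) (CB_rest P lt n.+1).
Proof. by move=> Rx notRx /(_ x) [/(_ Rx)]. Qed.

Lemma CB_rest_omega_exhausted :
  (forall x, P x -> CB_stage_omega P lt x) ->
  same_set (CB_rest_omega P lt) (CB_rest_omega1 P lt).
Proof.
move=> exhaust x; split.
- by move=> Rx; have [Px _] := Rx 0; have [n Sn] := exhaust x Px; case: (Rx n).
- by move=> [Px notS]; case: notS; left; exact: exhaust.
Qed.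

End CantorBendixson.

Definition Q_height (p : nat * nat) : nat := p.1 * p.2.

Lemma Q_lt_height m (p : nat * nat) : m < Q_height p -> Q_lt (1, m) p.
Proof. by rewrite /Q_lt /= dvd1n mul1n. Qed.

Lemma Q_minimal_height m (S : nat * nat -> Prop) x :
  (forall y, S y <-> Q_carrier y /\ m <= Q_height y) ->
  minimal_in Q_lt S x <-> Q_carrier x /\ Q_height x = m.
Proof.
move=> Sdef; split.
- move=> [/Sdef [Px le_mx] notmin]; split=> //; apply/eqP; rewrite eqn_leq le_mx andbT.
  rewrite leqNgt; apply/negP => lt_mx; apply: notmin; exists (1, m).
  by split; [apply/Sdef; rewrite /Q_carrier /Q_height /= mul1n | exact: Q_lt_height].
- move=> [Px hx]; split; first by apply/Sdef; rewrite hx.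
  move=> [q [/Sdef [_ le_mq] [_ lt_qx]]].
  by move: (leq_ltn_trans le_mq (lt_qx : Q_height q < Q_height x)); rewrite hx ltnn.
Qed.

Lemma Q_stageE n x :
  CB_stage Q_carrier Q_lt n x <-> Q_carrier x /\ Q_height x <= n.
Proof.
elim: n x => [|n IH] x /=.
  have carrierE y : Q_carrier y <-> Q_carrier y /\ 0 <= Q_height y by split=> [|[]].
  have minE := @Q_minimal_height 0 _ x carrierE.
  by rewrite leqn0; split=> [/minE [Px ->]|[Px /eqP hx0]] //; apply/minE.
have restE y : Q_carrier y /\ ~ CB_stage Q_carrier Q_lt n y <->
               Q_carrier y /\ n.+1 <= Q_height y.
  rewrite ltnNge; split=> -[Py H]; split=> //.
  - by apply/negP => le; apply/H/IH.
  - by move/IH=> [_ le]; move: H; rewrite le.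
rewrite leq_eqVlt ltnS; split.
- by case=> [/IH [Px ->]|/(@Q_minimal_height n.+1 _ x restE) [Px ->]]; rewrite ?eqxx ?orbT.
- move=> [Px /orP [/eqP h|le]]; last by left; apply/IH.
  by right; apply/(@Q_minimal_height n.+1 _ x restE).
Qed.

Theorem theorem6p5 : CB_rank_is_omega Q_carrier Q_lt.
Proof.
split.
- move=> n; apply: (@CB_rest_succ_neq _ _ _ n (1, n.+1)).
  + by split=> // /Q_stageE [_]; rewrite /Q_height mul1n ltnn.
  + by move=> [_]; apply; apply/Q_stageE; rewrite /Q_height mul1n.
- apply: CB_rest_omega_exhausted => x Px.
  by exists (Q_height x); apply/Q_stageE.
Qed.
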